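(* Let $F$ be an infinite field (e.g. $\mathbb{R}$ or $\mathbb{C}$), let $V$ be a vector space over $F$, and let $n\ge 1$. If a widget with $n$ pairs in $V$ is valid, then it contains a subwidget which is legal but not full.
   Context: A widget with $n$ pairs in $V$ is an indexed family of $n$ pairs of vectors $p_i=(p_i^+,p_i^-)$, $i=1,\dots,n$, in $V$ (the vectors $p_i^+,p_i^-$ are called the points of the pair $p_i$). A section of a widget is a set of points containing at most one point from each pair. A widget with $n$ pairs is legal if every section spans a linear subspace of $V$ of dimension at most $n-1$. A widget with $n$ pairs is full if the linear span of all its $2n$ points has dimension at least $n$. A widget is valid if it is both legal and full. A subwidget of a widget with $n$ pairs is the widget formed by some $k$ of its pairs with $1\le k<n$; it is itself a widget with $k$ pairs, so it is legal if every one of its sections spans a subspace of dimension at most $k-1$, and full if its $2k$ points span a subspace of dimension at least $k$. *)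

From HB Require Import structures.
From mathcomp Require Import all_boot all_order all_algebra.
Set Implicit Arguments. Unset Strict Implicit. Unset Printing Implicit Defensive.
Import GRing.Theory.
Local Open Scope ring_scope.

Definition infinite_field (F : fieldType) : Prop :=
  forall s : seq F, exists x : F, x \notin s.

Section Widgets.
Variables (F : fieldType) (V : lmodType F).

Definition lin_indep (s : seq V) : Prop :=
  forall c : nat -> F, \sum_(i < size s) c i *: s`_i = 0 ->
    forall i, (i < size s)%N -> c i = 0.

(* dim span(S) <= d : every linearly independent family drawn from S has size <= d
   (the dimension of the span of a finite set is the maximal size of an
   independent subfamily). *)
Definition span_dim_le (S : seq V) (d : nat) : Prop :=
  forall s : seq V, {subset s <= S} -> lin_indep s -> (size s <= d)%N.

Definition span_dim_ge (S : seq V) (d : nat) : Prop :=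
  exists s : seq V, [/\ {subset s <= S}, lin_indep s & (d <= size s)%N].

(* A widget indexed by a finite type I (|I| pairs): pair i = (p_i^+, p_i^-). *)
Definition widget (I : finType) := I -> V * V.

(* A section is given by choosing, for each pair, no point (None),
   p_i^+ (Some true) or p_i^- (Some false). *)
Definition section_points (I : finType) (w : widget I) (sigma : I -> option bool)
  : seq V :=
  pmap (fun i => omap (fun b : bool => if b then (w i).1 else (w i).2) (sigma i))
       (enum I).

Definition all_points (I : finType) (w : widget I) : seq V :=
  flatten [seq [:: (w i).1; (w i).2] | i <- enum I].

Definition legal (I : finType) (w : widget I) : Prop :=
  forall sigma : I -> option bool, span_dim_le (section_points w sigma) (#|I| - 1).

Definition full (I : finType) (w : widget I) : Prop :=
  span_dim_ge (all_points w) #|I|.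

Definition valid (I : finType) (w : widget I) : Prop := legal w /\ full w.

Definition subwidget (I : finType) (w : widget I) (S : {set I})
  : widget {i : I | i \in S} :=
  fun j => w (val j).

End Widgets.

Arguments subwidget {F V I} w S _.
Arguments legal {F V I} w.
Arguments full {F V I} w.
Arguments valid {F V I} w.

From HB Require Import structures.
From mathcomp Require Import all_boot all_order all_algebra.
From Stdlib Require Import Classical.
From mathcomp Require Import zify.
Set Implicit Arguments. Unset Strict Implicit. Unset Printing Implicit Defensive.
Import GRing.Theory.
Local Open Scope ring_scope.

(* Coordinates with respect to a basis of the span of the 2n points turn
   every span into a subspace of some F^k.  Rado's theorem for pairs, proved by
   fixing one pair at a time and using the submodularity of dimension, says:
   if every set S of pairs spans a space of dimension at least |S|, one can
   choose a point from each pair so that the chosen points are independent.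
   By legality no section spans dimension n, so some set S of pairs spans
   dimension less than |S|.  Fullness rules out S = all pairs, and the
   subwidget on S is then legal and not full. *)

Lemma lin_indep_free (F : fieldType) (vT : vectType F) (X : seq vT) :
  lin_indep X <-> free X.
Proof.
split=> [indepX | /(@freeP _ _ _ (in_tuple X)) freeX c cX0 i ltiX].
  apply/(@freeP _ _ _ (in_tuple X)) => k kX0 i.
  have := indepX (fun l => if insub l is Some o then k o else 0) _ i (ltn_ord i).
  rewrite valK; apply; rewrite -[RHS]kX0.
  by apply: eq_bigr => j _; rewrite valK.
exact: (freeX (fun j => c j) cX0 (Ordinal ltiX)).
Qed.

Section Coordinates.
Variables (F : fieldType) (V : lmodType F).

Lemma lin_indep_map (W : lmodType F) (g : {linear W -> V}) (X : seq W) :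
  injective g -> lin_indep (map g X) <-> lin_indep X.
Proof.
move=> inj_g; have gX (c : nat -> F) :
    \sum_(i < size (map g X)) c i *: (map g X)`_i
    = g (\sum_(i < size X) c i *: X`_i).
  rewrite linear_sum size_map; apply: eq_bigr => i _.
  by rewrite linearZ (nth_map 0) ?linear0.
split=> indepX c cX0 i lti.
  by apply: indepX; rewrite ?gX ?cX0 ?linear0 ?size_map.
apply: indepX; last by rewrite -(size_map g).
by apply: inj_g; rewrite -gX cX0 linear0.
Qed.

Lemma lin_indep_cons (B : seq V) p :
  lin_indep B -> ~ (exists c : nat -> F, p = \sum_(l < size B) c l *: B`_l) ->
  lin_indep (p :: B).
Proof.
move=> indepB p_out c /=; rewrite big_ord_recl /= => cpB0.
have [c0 | c0_neq0] := eqVneq (c 0%N) 0.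
  move: cpB0; rewrite c0 scale0r add0r => /(indepB (fun l => c l.+1)) cB0.
  by case.
case: p_out; exists (fun l => - c l.+1 / c 0%N).
apply: (scalerI c0_neq0); rewrite scaler_sumr.
have -> : c 0%N *: p = - \sum_(i < size B) c i.+1 *: B`_i.
  by apply/eqP; rewrite -addr_eq0 cpB0.
rewrite -sumrN; apply: eq_bigr => i _.
by rewrite scalerA mulrCA divff // mulr1 scaleNr.
Qed.

Lemma exists_basis (P : seq V) :
  exists B (f : V -> nat -> F), lin_indep B /\
    {in P, forall x, x = \sum_(l < size B) f x l *: B`_l}.
Proof.
elim: P => [|p P [B [f [indepB reprP]]]].
  by exists [::], (fun _ _ => 0); split=> // c _ i.
have [[c pBc] | p_out] :=
  classic (exists c : nat -> F, p = \sum_(l < size B) c l *: B`_l).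
  exists B, (fun x => if x == p then c else f x); split=> // x.
  by rewrite inE; case: eqP => [-> | _ /reprP].
exists (p :: B), (fun x l => if x == p then (l == 0)%:R
                             else if l is l'.+1 then f x l' else 0).
split; first exact: lin_indep_cons.
move=> x; rewrite inE big_ord_recl /=; case: eqP => [-> _ | _ /reprP {1}->].
  by rewrite scale1r big1 ?addr0 // => i _; rewrite scale0r.
by rewrite scale0r add0r.
Qed.

Definition lincomb (B : seq V) (r : 'rV[F]_(size B)) : V :=
  \sum_(l < size B) r 0 l *: B`_l.

Fact lincomb_is_linear B : linear (@lincomb B).
Proof.
move=> a r1 r2; rewrite /lincomb scaler_sumr -big_split /=.
by apply: eq_bigr => l _; rewrite !mxE scalerDl scalerA.
Qed.

HB.instance Definition _ (B : seq V) :=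
  GRing.isLinear.Build F _ _ _ (@lincomb B) (@lincomb_is_linear B).

Lemma lincomb_inj B : lin_indep B -> injective (@lincomb B).
Proof.
move=> indepB r1 r2 /eqP; rewrite -subr_eq0 -linearB /= => /eqP r0.
apply/eqP; rewrite -subr_eq0; apply/eqP/rowP => l; rewrite [RHS]mxE.
pose c m := if insub m is Some o then (r1 - r2) 0 o else 0.
have := indepB c _ l (ltn_ord l); rewrite /c valK; apply.
by rewrite -[RHS]r0; apply: eq_bigr => j _; rewrite valK.
Qed.

Lemma exists_coordinates (P : seq V) :
  exists k (phi : V -> 'rV[F]_k),
    forall s, {subset s <= P} -> lin_indep s <-> free (map phi s).
Proof.
have [B [f [indepB reprP]]] := exists_basis P.
exists (size B), (fun x => \row_l f x l) => s sP.
rewrite -lin_indep_free -(lin_indep_map _ (lincomb_inj indepB)) -map_comp.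
rewrite map_id_in // => x /sP /reprP {2}->.
by apply: eq_bigr => l _; rewrite mxE.
Qed.

End Coordinates.

Section RadoPairs.
Variables (F : fieldType) (vT : vectType F) (I : finType) (v : I -> bool -> vT).

(* [sel j = None] means the pair [j] is not decided yet and contributes both
   of its points (in [section_points], [None] drops the pair instead). *)
Definition pair_space (sel : I -> option bool) (j : I) : {vspace vT} :=
  if sel j is Some b then <[v j b]>%VS else (<[v j true]> + <[v j false]>)%VS.

Definition pairs_space (sel : I -> option bool) (S : {set I}) : {vspace vT} :=
  (\sum_(j in S) pair_space sel j)%VS.

Definition hall (sel : I -> option bool) : bool :=
  [forall S : {set I}, #|S| <= \dim (pairs_space sel S)]%N.

Definition fix_pair (sel : I -> option bool) (i : I) (b : bool) (j : I) : option bool :=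
  if j == i then Some b else sel j.

Lemma pair_space_fix sel i b j :
  j != i -> pair_space (fix_pair sel i b) j = pair_space sel j.
Proof. by rewrite /pair_space /fix_pair => /negbTE ->. Qed.

Lemma pair_space_fixed sel i b : pair_space (fix_pair sel i b) i = <[v i b]>%VS.
Proof. by rewrite /pair_space /fix_pair eqxx. Qed.

Lemma pair_space_sub_pairs_space sel (S : {set I}) j :
  j \in S -> (pair_space sel j <= pairs_space sel S)%VS.
Proof. by move=> jS; apply: sumv_sup jS _. Qed.

Lemma hall_violator_mem sel i b (S : {set I}) : hall sel ->
  (\dim (pairs_space (fix_pair sel i b) S) < #|S|)%N -> i \in S.
Proof.
move=> /forallP/(_ S) hallS; apply: contraTT => iS; rewrite -leqNgt.
apply: leq_trans hallS (dimvS _); apply/subv_sumP => j jS.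
have ji : j != i by apply: contraNneq iS => <-.
by rewrite -(pair_space_fix _ b ji) pair_space_sub_pairs_space.
Qed.

Lemma hall_fix_pair sel i : hall sel -> sel i = None ->
  hall (fix_pair sel i true) || hall (fix_pair sel i false).
Proof.
move=> hall_sel sel_i; apply: contraT => /norP[/forallPn[S1 ltS1] /forallPn[S2 ltS2]].
rewrite -!ltnNge in ltS1 ltS2.
have iS1 := hall_violator_mem hall_sel ltS1.
have iS2 := hall_violator_mem hall_sel ltS2.
set X := pairs_space _ S1 in ltS1; set Y := pairs_space _ S2 in ltS2.
have fixX j : j \in S1 -> j != i -> (pair_space sel j <= X)%VS.
  by move=> jS ji; rewrite -(pair_space_fix _ true ji) pair_space_sub_pairs_space.
have fixY j : j \in S2 -> j != i -> (pair_space sel j <= Y)%VS.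
  by move=> jS ji; rewrite -(pair_space_fix _ false ji) pair_space_sub_pairs_space.
have sub_sum : (pairs_space sel (S1 :|: S2) <= X + Y)%VS.
  apply/subv_sumP => j; rewrite inE; have [-> _ | ji /orP[jS|jS]] := eqVneq j i.
  - rewrite /pair_space sel_i; apply: addvS.
      by rewrite -(pair_space_fixed sel) pair_space_sub_pairs_space.
    by rewrite -(pair_space_fixed sel) pair_space_sub_pairs_space.
  - exact: subv_trans (fixX j jS ji) (addvSl _ _).
  - exact: subv_trans (fixY j jS ji) (addvSr _ _).
have sub_cap : (pairs_space sel ((S1 :&: S2) :\ i) <= X :&: Y)%VS.
  apply/subv_sumP => j; rewrite !inE => /and3P[ji jS1 jS2].
  by rewrite subv_cap fixX ?fixY.
(* dim X + dim Y = dim (X + Y) + dim (X :&: Y) >= |S1 :|: S2| + |S1 :&: S2| - 1 *)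
have := forallP hall_sel (S1 :|: S2); have := forallP hall_sel ((S1 :&: S2) :\ i).
move: (dimvS sub_sum) (dimvS sub_cap) (dimv_sum_cap X Y) (cardsUI S1 S2).
rewrite (cardsD1 i (S1 :&: S2)) inE iS1 iS2; lia.
Qed.

Definition undecided (sel : I -> option bool) : {set I} := [set j | sel j == None].

Lemma undecided_fix_pair sel i b :
  sel i = None -> (#|undecided (fix_pair sel i b)| < #|undecided sel|)%N.
Proof.
move=> sel_i; apply: proper_card; rewrite properE; apply/andP; split.
  by apply/subsetP => j; rewrite !inE /fix_pair; case: ifP.
by apply/subsetPn; exists i; rewrite !inE /fix_pair ?eqxx ?sel_i.
Qed.

Lemma hall_total sel : hall sel ->
  exists2 t : I -> option bool, (forall j, t j != None) & hall t.
Proof.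
have [m] := ubnP #|undecided sel|; elim: m sel => // m IH sel lt_m hall_sel.
case: (pickP [pred j | sel j == None]) => [i /eqP sel_i | total].
  have /orP[hall_b | hall_b] := hall_fix_pair hall_sel sel_i; apply: IH hall_b;
    exact: leq_trans (undecided_fix_pair _ sel_i) lt_m.
by exists sel => // j; apply: negbT (total j).
Qed.

End RadoPairs.

Section WidgetPoints.
Variables (F : fieldType) (V : lmodType F) (I : finType) (w : widget V I).

Definition point (j : I) (b : bool) : V := if b then (w j).1 else (w j).2.

Lemma all_pointsP x : reflect (exists j b, x = point j b) (x \in all_points w).
Proof.
apply: (iffP flatten_mapP) => [[j _] | [j [b ->]]].
  by rewrite !inE => /orP[] /eqP ->; [exists j, true | exists j, false].
by exists j; rewrite ?mem_enum // !inE; case: b; rewrite eqxx ?orbT.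
Qed.

Lemma section_pointsP sigma x :
  reflect (exists j b, sigma j = Some b /\ x = point j b)
          (x \in section_points w sigma).
Proof.
rewrite mem_pmap; apply: (iffP mapP) => [[j _] | [j [b [sj ->]]]].
  by case sj: (sigma j) => [b|] //= [->]; exists j, b.
by exists j; rewrite ?mem_enum // sj.
Qed.

Lemma section_points_sub sigma : {subset section_points w sigma <= all_points w}.
Proof. by move=> x /section_pointsP[j [b [_ ->]]]; apply/all_pointsP; exists j, b. Qed.

Lemma size_section_points sigma : (size (section_points w sigma) <= #|I|)%N.
Proof. by rewrite size_pmap cardE; apply: count_size. Qed.

End WidgetPoints.

Section WidgetCoordinates.
Variables (F : fieldType) (V : lmodType F) (I : finType) (w : widget V I).
Variables (k : nat) (phi : V -> 'rV[F]_k).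
Hypothesis phiP :
  forall s, {subset s <= all_points w} -> lin_indep s <-> free (map phi s).

Let u j b := phi (point w j b).

Lemma subwidget_points_sub (S : {set I}) :
  {subset all_points (subwidget w S) <= all_points w}.
Proof. by move=> x /all_pointsP[j [b ->]]; apply/all_pointsP; exists (val j), b. Qed.

Lemma span_dim_le_dimv X d : {subset X <= all_points w} ->
  (\dim <<map phi X>> <= d)%N -> span_dim_le X d.
Proof.
move=> XP dimX s sX /(phiP (fun x xs => XP x (sX x xs))) /eqP.
rewrite size_map => <-; exact: leq_trans (dimvS (sub_span (sub_map sX))) dimX.
Qed.

Lemma span_dim_ge_dimv X d : {subset X <= all_points w} ->
  span_dim_ge X d -> (d <= \dim <<map phi X>>)%N.
Proof.
move=> XP [s [sX /(phiP (fun x xs => XP x (sX x xs))) /eqP free_s le_ds]].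
rewrite size_map in free_s; rewrite -free_s in le_ds.
exact: leq_trans le_ds (dimvS (sub_span (sub_map sX))).
Qed.

Lemma span_points_sub X (S : {set I}) :
  (forall x, x \in X -> exists j b, j \in S /\ x = point w j b) ->
  (<<map phi X>> <= pairs_space u (fun _ => None) S)%VS.
Proof.
move=> XS; apply/span_subvP => _ /mapP[x /XS[j [b [jS ->]]] ->].
apply: subv_trans (pair_space_sub_pairs_space _ _ jS).
by rewrite -memvE; case: b; [apply: addvSl | apply: addvSr].
Qed.

Lemma full_dim : full w -> (#|I| <= \dim (pairs_space u (fun _ => None) setT))%N.
Proof.
move=> /(span_dim_ge_dimv (fun x xP => xP)) /leq_trans; apply; apply: dimvS.
by apply: span_points_sub => x /all_pointsP[j [b ->]]; exists j, b.
Qed.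

Lemma subwidget_span_sub (S : {set I}) :
  (<<map phi (all_points (subwidget w S))>> <= pairs_space u (fun _ => None) S)%VS.
Proof.
apply: span_points_sub => x /all_pointsP[j [b ->]].
by exists (val j), b; split=> //; apply: valP.
Qed.

Lemma subwidget_legal_not_full (S : {set I}) :
  (\dim (pairs_space u (fun _ => None) S) < #|S|)%N ->
  legal (subwidget w S) /\ ~ full (subwidget w S).
Proof.
move=> dimS; have dim_sub := leq_ltn_trans (dimvS (subwidget_span_sub S)) dimS.
have card_sub : #|{: {i | i \in S}}| = #|S| by rewrite card_sig; apply: eq_card.
split=> [sigma | /(span_dim_ge_dimv (subwidget_points_sub (S := S)))]; rewrite card_sub.
  apply: span_dim_le_dimv => [x /section_points_sub /subwidget_points_sub //|].
  apply: leq_trans (dimvS (sub_span (sub_map (section_points_sub (sigma := sigma))))) _.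
  by rewrite subn1 -ltnS (ltn_predK dim_sub).
by rewrite leqNgt dim_sub.
Qed.

Lemma hall_fails : legal w -> (0 < #|I|)%N -> ~~ hall u (fun _ => None).
Proof.
move=> legal_w I_gt0; apply/negP => /hall_total[sel total hall_sel].
set X := section_points w sel.
have dimX : (#|I| <= \dim <<map phi X>>)%N.
  rewrite -cardsT; apply: leq_trans (forallP hall_sel setT) (dimvS _).
  apply/subv_sumP => j _; rewrite /pair_space.
  case sel_j: (sel j) (total j) => [b|] // _.
  by rewrite -memvE; apply/memv_span/map_f/section_pointsP; exists j, b.
have sizeX := size_section_points w sel.
have spanX := dim_span (map phi X); rewrite size_map in spanX.
have /(phiP (section_points_sub (sigma := sel))) indepX : free (map phi X).
  by rewrite /free size_map eqn_leq spanX (leq_trans sizeX dimX).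
have := legal_w sel X (fun x xX => xX) indepX; lia.
Qed.

End WidgetCoordinates.

Theorem corollary1p2 (F : fieldType) (V : lmodType F) (n : nat)
  (w : widget V 'I_n) :
  infinite_field F -> (1 <= n)%N -> valid w ->
  exists S : {set 'I_n},
    [/\ (1 <= #|S|)%N, (#|S| < n)%N,
        legal (subwidget w S) & ~ full (subwidget w S)].
Proof.
move=> _ n_gt0 [legal_w full_w].
have [k [phi phiP]] := exists_coordinates (all_points w).
have I_gt0 : (0 < #|'I_n|)%N by rewrite card_ord.
have /forallPn[S] := hall_fails phiP legal_w I_gt0; rewrite -ltnNge => dimS.
have [legal_S not_full_S] := subwidget_legal_not_full phiP dimS.
have S_proper : S \proper setT.
  rewrite properT; apply: contraTneq dimS => ->.
  by rewrite -leqNgt cardsT full_dim.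
exists S; split=> //; first exact: leq_ltn_trans (leq0n _) dimS.
by move: (proper_card S_proper); rewrite cardsT card_ord.
Qed.
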